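(* Let $a$ be a positive integer and $N>0$. Then \[ \mathcal{E}_a(N)=\bigcup_{d\mid a}\{\,d\,n':\ n'\in\mathcal{E}^*_{a/d}(N/d)\,\} \] (the union over positive divisors $d$ of $a$), and consequently \[ E_a(N)=\sum_{d\mid a}E^*_{a/d}(N/d). \]
   Context: For a positive integer $b$ and a positive integer $n$, let $R(n;b)$ denote the number of pairs $(x,y)$ of positive integers with $\frac{b}{n}=\frac1x+\frac1y$. Let $\mathcal{E}_b=\{n\in\mathbb{N}: R(n;b)=0\}$ and $\mathcal{E}^*_b=\{n\in\mathcal{E}_b:\gcd(n,b)=1\}$. For real $x>0$ let $\mathcal{E}_b(x)=\{n\in\mathcal{E}_b:n\le x\}$, $\mathcal{E}^*_b(x)=\{n\in\mathcal{E}^*_b:n\le x\}$, $E_b(x)=\#\mathcal{E}_b(x)$ and $E^*_b(x)=\#\mathcal{E}^*_b(x)$. *)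

From mathcomp Require Import all_boot all_order all_algebra.
From mathcomp Require Import boolp reals.
Set Implicit Arguments. Unset Strict Implicit. Unset Printing Implicit Defensive.
Import Order.TTheory GRing.Theory Num.Theory.

(* (x,y) positive integers with b/n = 1/x + 1/y, cleared of denominators
   (n, x, y > 0):  b*x*y = n*(x+y). *)
Definition is_rep (b n x y : nat) : Prop :=
  (0 < x)%N /\ (0 < y)%N /\ (b * x * y = n * (x + y))%N.

Definition R_zero (b n : nat) : Prop := ~ exists x y, is_rep b n x y.

Definition inE (b n : nat) : Prop := (0 < n)%N /\ R_zero b n.

Definition inEstar (b n : nat) : Prop := inE b n /\ coprime n b.

Definition inE_le {R : realType} (b : nat) (x : R) (n : nat) : Prop :=
  inE b n /\ (n%:R <= x)%R.
Definition inEstar_le {R : realType} (b : nat) (x : R) (n : nat) : Prop :=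
  inEstar b n /\ (n%:R <= x)%R.

(* E_b(x) = #\mathcal{E}_b(x): the positive integers n <= x are exactly
   1, ..., truncn x (for x >= 0), so we count those lying in \mathcal{E}_b. *)
Definition Ecount {R : realType} (b : nat) (x : R) : nat :=
  size [seq n <- iota 1 (Num.truncn x) | `[< inE b n >] ].
Definition Estarcount {R : realType} (b : nat) (x : R) : nat :=
  size [seq n <- iota 1 (Num.truncn x) | `[< inEstar b n >] ].

From Pilot Require Import Defs.
From mathcomp Require Import all_boot all_order all_algebra.
From mathcomp Require Import boolp reals.
Import Order.TTheory GRing.Theory Num.Theory.
Set Implicit Arguments. Unset Strict Implicit. Unset Printing Implicit Defensive.

(* Multiplying b, n and x, y by a common factor d preserves b x y = n (x + y),
   so n is exceptional for a iff n / g is exceptional for a / g, g = gcd(n, a).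
   Conversely d = gcd(d n', a) whenever d | a and n' is coprime to a / d, so the
   decomposition n = d n' is unique and the counts add up over the divisors. *)

Lemma R_zero_scale (d b n : nat) : (0 < d)%N ->
  R_zero (d * b) (d * n) <-> R_zero b n.
Proof.
move=> d_gt0; rewrite /R_zero /is_rep.
split=> noRep [x [y [x_gt0 [y_gt0 rep]]]]; apply: noRep; exists x, y; do 2 split=> //.
- by rewrite -!mulnA; congr (d * _); rewrite mulnA rep.
- by apply/eqP; rewrite -(eqn_pmul2l d_gt0) !mulnA rep.
Qed.

Lemma inE_scale (d b n : nat) : (0 < d)%N -> Defs.inE (d * b) (d * n) <-> Defs.inE b n.
Proof.
move=> d_gt0; rewrite /Defs.inE muln_gt0 d_gt0 (R_zero_scale _ _ d_gt0).
by split=> -[].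
Qed.

Lemma gcdn_mul_coprime (d n a : nat) : d %| a -> coprime n (a %/ d) ->
  gcdn (d * n) a = d.
Proof.
case/dvdnP=> k ->; have [->|d_gt0] := posnP d; first by rewrite !muln0 gcdn0.
by rewrite mulnK // mulnC -muln_gcdl mulnC => /eqP ->; rewrite muln1.
Qed.

Lemma divisors_mul_coprime_inj (a d1 d2 n1 n2 : nat) : (0 < a)%N ->
  d1 \in divisors a -> d2 \in divisors a ->
  coprime n1 (a %/ d1) -> coprime n2 (a %/ d2) ->
  d1 * n1 = d2 * n2 -> d1 = d2 /\ n1 = n2.
Proof.
move=> a_gt0; rewrite -!dvdn_divisors // => d1a d2a cop1 cop2 eq12.
have d12 : d1 = d2.
  by rewrite -(gcdn_mul_coprime d1a cop1) -(gcdn_mul_coprime d2a cop2) eq12.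
split=> //; apply/eqP.
by rewrite -(eqn_pmul2l (dvdn_gt0 a_gt0 d1a)) eq12 d12.
Qed.

Lemma natr_mul_le_div (R : realType) (d n : nat) (x : R) : (0 < d)%N ->
  ((d * n)%:R <= x)%R = (n%:R <= x / d%:R)%R.
Proof. by move=> d_gt0; rewrite ler_pdivlMr ?ltr0n // natrM mulrC. Qed.

Lemma inE_le_divisorsP (R : realType) (a : nat) (N : R) (n : nat) : (0 < a)%N ->
  inE_le a N n <->
  exists2 d : nat, d \in divisors a &
    exists2 n' : nat, inEstar_le (a %/ d) (N / d%:R)%R n' & n = (d * n')%N.
Proof.
move=> a_gt0; split.
- case=> -[n_gt0 Rn] n_le; set g := gcdn n a.
  have g_gt0 : (0 < g)%N by rewrite gcdn_gt0 n_gt0.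
  have def_n : n = g * (n %/ g) by rewrite mulnC divnK // dvdn_gcdl.
  have def_a : a = g * (a %/ g) by rewrite mulnC divnK // dvdn_gcdr.
  exists g; first by rewrite -dvdn_divisors // dvdn_gcdr.
  exists (n %/ g) => //; split; last by rewrite -natr_mul_le_div // -def_n.
  split; first by rewrite -(inE_scale _ _ g_gt0) -def_n -def_a.
  by rewrite /coprime -(eqn_pmul2l g_gt0) muln_gcdr -def_n -def_a muln1.
- case=> d d_div [n' [[En' _] n'_le] ->].
  have d_dvd : d %| a by rewrite dvdn_divisors.
  have d_gt0 : (0 < d)%N := dvdn_gt0 a_gt0 d_dvd.
  split; last by rewrite natr_mul_le_div.
  by rewrite -{1}(divnK d_dvd) mulnC inE_scale.
Qed.

Lemma mem_iota_truncn (R : realType) (x : R) (n : nat) : (0 <= x)%R ->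
  (n \in iota 1 (Num.truncn x)) = (0 < n)%N && (n%:R <= x)%R.
Proof.
move=> x_ge0; rewrite mem_iota add1n ltnS; congr (_ && _).
by rewrite leqNgt truncn_lt_nat // -real_leNgt ?num_real // ger0_real.
Qed.

Lemma mem_filter_truncn (R : realType) (P : nat -> Prop) (x : R) (n : nat) :
  (0 <= x)%R -> (forall m, P m -> (0 < m)%N) ->
  (n \in [seq m <- iota 1 (Num.truncn x) | `[< P m >]]) = `[< P n /\ (n%:R <= x)%R >].
Proof.
move=> x_ge0 P_gt0; rewrite mem_filter mem_iota_truncn //.
apply/andP/asboolP => [[/asboolP Pn /andP[_ n_le]] | [Pn n_le]] //.
by split; [apply/asboolP | rewrite P_gt0].
Qed.

Lemma Ecount_sum_divisors (R : realType) (a : nat) (N : R) :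
  (0 < a)%N -> (0 < N)%R ->
  Ecount a N = (\sum_(d <- divisors a) Estarcount (a %/ d) (N / d%:R)%R)%N.
Proof.
move=> ha hN; rewrite /Ecount /Estarcount.
set Estar := fun d => [seq n <- iota 1 (Num.truncn (N / d%:R)) | `[< inEstar (a %/ d) n >]].
have Nd_ge0 d : (0 <= N / d%:R)%R by rewrite divr_ge0 ?ler0n ?ltW.
have mem_Estar d n : (n \in Estar d) = `[< inEstar_le (a %/ d) (N / d%:R) n >].
  by rewrite mem_filter_truncn // => m [[]].
rewrite (_ : \sum_(d <- _) _ = sumn [seq size (Estar d) | d <- divisors a]);
  last by rewrite sumnE big_map.
rewrite -(size_allpairs_dep (fun d n' => d * n')%N).
apply/perm_size/uniq_perm.
- exact/filter_uniq/iota_uniq.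
- apply: allpairs_uniq_dep => [|d _|]; first exact: divisors_uniq.
    exact/filter_uniq/iota_uniq.
  move=> p1 p2 /allpairsPdep[d1 [n1 [d1_div n1_in ->]]].
  move=> /allpairsPdep[d2 [n2 [d2_div n2_in ->]]] /=.
  move: n1_in n2_in; rewrite !mem_Estar => /asboolP[[_ cop1] _] /asboolP[[_ cop2] _].
  by case/(divisors_mul_coprime_inj ha d1_div d2_div cop1 cop2) => -> ->.
move=> n; rewrite mem_filter_truncn ?(ltW hN) //; last by move=> m [].
apply/asboolP/allpairsPdep.
- case/(inE_le_divisorsP _ _ ha)=> d d_div [n' n'_in ->].
  by exists d, n'; rewrite mem_Estar; split=> //; apply/asboolP.
- case=> d [n' [d_div /[!mem_Estar] /asboolP n'_in ->]].
  by apply/(inE_le_divisorsP _ _ ha); exists d => //; exists n'.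
Qed.

Theorem lemma2p1 (R : realType) (a : nat) (N : R) (ha : (0 < a)%N) (hN : (0 < N)%R) :
  (forall n : nat,
     inE_le a N n <->
     exists2 d : nat, d \in divisors a &
       exists2 n' : nat, inEstar_le (a %/ d) (N / d%:R)%R n' & n = (d * n')%N)
  /\ Ecount a N = (\sum_(d <- divisors a) Estarcount (a %/ d) (N / d%:R)%R)%N.
Proof.
split=> [n|]; first exact: inE_le_divisorsP.
exact: Ecount_sum_divisors.
Qed.
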